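(* Let $\varphi_0,\varphi_1\in\mathrm{Mon}_+$ and let $d$ be the distance defined by $d(\varphi_0,\varphi_1)^2=\min\mathcal{L}(v)$, the minimum being over all $v\in L^2([0,1],H^1_0([0,1]))$ admitting a Lagrangian flow $\varphi$ with $\varphi(0,\cdot)=\varphi_0$, $\varphi(1,\cdot)=\varphi_1$, where $\mathcal{L}(v)=\int_0^1\int_0^1 v^2+\tfrac14(\partial_x v)^2\,dx\,dt$. Then $$\sup_{x\in[0,1]}|\varphi_0(x)-\varphi_1(x)|\le 2\,d(\varphi_0,\varphi_1),$$ where the supremum is a pointwise supremum (not an essential supremum).
   Context: $\mathrm{Mon}_+$ denotes the set of nondecreasing functions $f:[0,1]\to[0,1]$ with $f(0)=0$ and $f(1)=1$. Definition (Lagrangian flow): let $v\in L^1([0,1],C([0,1]))$. A map $\varphi:[0,1]\times[0,1]\to[0,1]$, $(t,x)\mapsto\varphi(t,x)$, is a Lagrangian flow associated with $v$ if (i) $x\mapsto\varphi(t,x)$ is nondecreasing for every $t$, and (ii) for every $x$ the map $t\mapsto\varphi(t,x)$ is absolutely continuous and $\varphi(t,x)-\varphi(s,x)=\int_s^t v(r,\varphi(r,x))\,dr$ for all $0\le s<t\le 1$. *)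

From HB Require Import structures.
From mathcomp Require Import all_boot all_order all_algebra.
From mathcomp Require Import all_classical all_reals all_analysis.
Set Implicit Arguments. Unset Strict Implicit. Unset Printing Implicit Defensive.
Import Order.TTheory GRing.Theory Num.Theory.
Import numFieldNormedType.Exports.
Local Open Scope classical_set_scope.
Local Open Scope ring_scope.

Section Defs.
Variable R : realType.
Local Notation mu := (@lebesgue_measure R).

Definition Monp (f : R -> R) : Prop :=
  (forall x, x \in `[0%R, 1%R] -> f x \in `[0%R, 1%R]) /\
  (forall x y, x \in `[0%R, 1%R] -> y \in `[0%R, 1%R] -> x <= y -> f x <= f y) /\
  f 0 = 0 /\ f 1 = 1.

Definition abs_cont (a b : R) (f : R -> R) : Prop :=
  forall e : R, 0 < e -> exists2 d : R, 0 < d &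
    forall (n : nat) (u v : nat -> R),
      (forall i, (i < n)%N -> a <= u i /\ u i <= v i /\ v i <= b) ->
      (forall i, (i.+1 < n)%N -> v i <= u i.+1) ->
      \sum_(i < n) (v i - u i) < d ->
      \sum_(i < n) `|f (v i) - f (u i)| < e.

Definition lagrangian_flow (v : R -> R -> R) (phi : R -> R -> R) : Prop :=
  (forall t x, t \in `[0%R, 1%R] -> x \in `[0%R, 1%R] -> phi t x \in `[0%R, 1%R]) /\
  (forall t x y, t \in `[0%R, 1%R] -> x \in `[0%R, 1%R] -> y \in `[0%R, 1%R] -> x <= y ->
     phi t x <= phi t y) /\
  (forall x, x \in `[0%R, 1%R] ->
     abs_cont 0 1 (fun t => phi t x) /\
     mu.-integrable `[0%R, 1%R] (fun r => (v r (phi r x))%:E) /\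
     (forall s t, 0 <= s -> s < t -> t <= 1 ->
        ((phi t x - phi s x)%:E =
         \int[mu]_(r in `[s, t]) (v r (phi r x))%:E)%E)).

(* v in L^2([0,1], H^1_0([0,1])) with weak x-derivative w:
   v(t,x) = int_0^x w(t,y) dy, v(t,1) = 0, w(t,.) in L^2, jointly measurable,
   and finite L^2(H^1) norm. *)
Definition L2H10_with_deriv (v w : R -> R -> R) : Prop :=
  measurable_fun (((`[0%R, 1%R] : set R) `*` (`[0%R, 1%R] : set R)) : set (R * R)) (fun p : R * R => v p.1 p.2) /\
  measurable_fun (((`[0%R, 1%R] : set R) `*` (`[0%R, 1%R] : set R)) : set (R * R)) (fun p : R * R => w p.1 p.2) /\
  (forall t, t \in `[0%R, 1%R] ->
     mu.-integrable `[0%R, 1%R] (fun y => (w t y)%:E) /\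
     (\int[mu]_(y in `[0%R, 1%R]) ((w t y) ^+ 2)%:E < +oo)%E /\
     (forall x, x \in `[0%R, 1%R] ->
        ((v t x)%:E = \int[mu]_(y in `[0%R, x]) (w t y)%:E)%E) /\
     v t 1 = 0) /\
  (\int[mu]_(t in `[0%R, 1%R]) \int[mu]_(x in `[0%R, 1%R])
      ((v t x) ^+ 2 + (w t x) ^+ 2)%:E < +oo)%E.

Definition energy (v w : R -> R -> R) : \bar R :=
  (\int[mu]_(t in `[0%R, 1%R]) \int[mu]_(x in `[0%R, 1%R])
      ((v t x) ^+ 2 + (w t x) ^+ 2 / 4)%:E)%E.


Definition dist2 (phi0 phi1 : R -> R) : \bar R :=
  ereal_inf [set energy vw.1 vw.2 | vw in
    [set vw : (R -> R -> R) * (R -> R -> R) |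
       L2H10_with_deriv vw.1 vw.2 /\
       exists phi, lagrangian_flow vw.1 phi /\
         (forall x, x \in `[0%R, 1%R] -> phi 0 x = phi0 x) /\
         (forall x, x \in `[0%R, 1%R] -> phi 1 x = phi1 x)]].

Definition dist (phi0 phi1 : R -> R) : \bar R :=
  match dist2 phi0 phi1 with
  | r%:E => (Num.sqrt r)%:E
  | +oo%E => +oo%E
  | -oo%E => -oo%E
  end.

End Defs.

From HB Require Import structures.
From mathcomp Require Import all_boot all_order all_algebra.
From mathcomp Require Import all_classical all_reals all_analysis.
From mathcomp Require Import lra measurable_realfun.
Import Order.TTheory GRing.Theory Num.Theory.
Import numFieldNormedType.Exports.
Local Open Scope classical_set_scope.
Local Open Scope ring_scope.

(* Let v be an admissible velocity with flow phi.  Then phi1 x - phi0 x is the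
   integral of v (t, phi t x) over t, and since v t 0 = 0 we have
   |v t y| <= int_0^1 |d_x v t|.  Young's inequality lam |a| <= a^2/2 + lam^2/2
   turns these into lam |phi0 x - phi1 x| <= 2 L(v) + lam^2/2 for every lam >= 0;
   the choice lam = |phi0 x - phi1 x| gives |phi0 x - phi1 x|^2 <= 4 L(v), and
   the infimum over v gives the claim. *)

Lemma ge0_le_integral_nonmeasurable d (T : measurableType d) (R : realType)
    (mu : {measure set T -> \bar R}) (D : set T) (f g : T -> \bar R) :
  (forall x, D x -> (0 <= f x)%E) -> (forall x, D x -> (f x <= g x)%E) ->
  (\int[mu]_(x in D) f x <= \int[mu]_(x in D) g x)%E.
Proof.
(* The integral of a nonnegative function is a supremum over its simple minorants. *)
move=> f0 fg; have g0 x : D x -> (0 <= g x)%E.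
  by move=> Dx; exact: le_trans (f0 x Dx) (fg x Dx).
rewrite (ge0_integralE mu f0) (ge0_integralE mu g0).
apply: ereal_sup_le => _ [h hf <-]; exists h => //= x; apply: le_trans (hf x) _.
by rewrite !patchE; case: ifP => // /set_mem; exact: fg.
Qed.

Lemma mul_normr_le_sqr (R : realFieldType) (lam a : R) :
  lam * `|a| <= 2 * (a ^+ 2 / 4) + lam ^+ 2 / 2.
Proof.
rewrite -[a ^+ 2]real_normK ?num_real //; have := sqr_ge0 (lam - `|a|).
rewrite sqrrB; lra.
Qed.

Section scaled_abse_integral.
Context {d} {T : measurableType d} {R : realType}.
Context (mu : {measure set T -> \bar R}) {D : set T}.
Hypothesis mD : measurable D.

Lemma scaled_abse_integral_le (h : T -> R) (g : T -> \bar R) (lam k c : R) :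
  mu.-integrable D (EFin \o h) -> measurable_fun D g ->
  (forall x, D x -> (0 <= g x)%E) -> 0 <= lam -> 0 <= k -> 0 <= c ->
  (forall x, D x -> ((lam * `|h x|)%:E <= k%:E * g x + c%:E)%E) ->
  (lam%:E * `|\int[mu]_(x in D) (h x)%:E|
     <= k%:E * \int[mu]_(x in D) g x + c%:E * mu D)%E.
Proof.
move=> hi mg g0 lam0 k0 c0 hg.
have mh : measurable_fun D h by apply/measurable_EFinP; exact: measurable_int hi.
apply: le_trans (_ : lam%:E * \int[mu]_(x in D) (`|h x|)%:E <= _)%E.
  apply: lee_wpmul2l; first by rewrite lee_fin.
  apply: le_trans (le_abse_integral mu mD (measurable_int _ hi)) _.
  by under eq_integral do rewrite abse_EFin.
have mnh : measurable_fun D (fun x => (`|h x|)%:E).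
  by apply/measurable_EFinP; exact: measurableT_comp.
rewrite -ge0_integralZl_EFin // -integral_cst // -ge0_integralZl_EFin //.
rewrite -ge0_integralD //; last 2 first.
- by move=> x Dx; rewrite mule_ge0 ?lee_fin ?g0.
- exact: measurable_funeM.
apply: ge0_le_integral => //.
- by move=> x _; rewrite mule_ge0 ?lee_fin.
- exact: measurable_funeM.
- by apply: emeasurable_funD; [exact: measurable_funeM | exact: measurable_cst].
Qed.

End scaled_abse_integral.

Lemma lebesgue_measure_itv01 (R : realType) :
  lebesgue_measure (`[0%R, 1%R]%classic : set R) = 1%E.
Proof. by rewrite lebesgue_measure_itv /= lte_fin ltr01 -EFinD subr0. Qed.

Section energy_bounds.
Context {R : realType}.
Local Notation mu := (@lebesgue_measure R).
Local Notation I01 := (`[0%R, 1%R]%classic : set R).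
Local Notation I01sq := (I01 `*` I01).
Context {v w : R -> R -> R} (vw : L2H10_with_deriv v w).

Definition slice_energy (t : R) : \bar R :=
  (\int[mu]_(x in I01) ((v t x) ^+ 2 + (w t x) ^+ 2 / 4)%:E)%E.

Lemma slice_energy_ge0 t : (0 <= slice_energy t)%E.
Proof. by apply: integral_ge0 => x _; rewrite lee_fin addr_ge0 ?divr_ge0 ?sqr_ge0. Qed.

Lemma measurable_slice_energy : measurable_fun I01 slice_energy.
Proof.
have [mv [mw _]] := vw.
pose f p := ((v p.1 p.2) ^+ 2 + (w p.1 p.2) ^+ 2 / 4)%:E.
have mI2 : measurable I01sq by exact: measurableX.
have mf : measurable_fun I01sq f.
  apply/measurable_EFinP; apply: measurable_funD; first exact: measurable_funX.
  by apply: measurable_funM; [exact: measurable_funX | exact: measurable_cst].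
have f0 p : (0 <= (f \_ I01sq) p)%E.
  by rewrite patchE; case: ifP => // _; rewrite lee_fin addr_ge0 ?divr_ge0 ?sqr_ge0.
apply: (eq_measurable_fun (fubini_F mu (f \_ I01sq))).
  move=> t /set_mem t01; rewrite /fubini_F /slice_energy [RHS]integral_mkcond.
  by apply: eq_integral => y _; rewrite !patchE in_setX (mem_set t01).
apply: measurable_funS measurableT _ _ => //.
exact: (measurable_fun_fubini_tonelli_F (m2 := mu) _
  ((measurable_restrictT _ mI2).1 mf) f0).
Qed.

Lemma velocity_le_slice_energy (lam t y : R) :
  0 <= lam -> t \in `[0%R, 1%R] -> y \in `[0%R, 1%R] ->
  ((lam * `|v t y|)%:E <= 2%:E * slice_energy t + (lam ^+ 2 / 2)%:E)%E.
Proof.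
move=> lam0 t01 y01; have [_ [_ [slices _]]] := vw.
have [wi [_ [vE _]]] := slices t t01.
have y0y1 : `[0%R, y]%classic `<=` I01.
  move=> z /=; rewrite !in_itv /= => /andP[-> zy]; move: y01.
  by rewrite in_itv /= => /andP[_]; exact: le_trans.
have mw2 : measurable_fun I01 (fun z => ((w t z) ^+ 2 / 4)%:E).
  apply/measurable_EFinP; apply: measurable_funM; last exact: measurable_cst.
  by apply: measurable_funX; apply/measurable_EFinP; exact: measurable_int wi.
have w20 z : (0 <= ((w t z) ^+ 2 / 4)%:E)%E by rewrite lee_fin divr_ge0 ?sqr_ge0.
rewrite EFinM -abse_EFin (vE y y01).
have wi0y : mu.-integrable `[0%R, y] (fun z => (w t z)%:E) by exact: integrableS wi.
have mw20y : measurable_fun `[0%R, y] (fun z => ((w t z) ^+ 2 / 4)%:E).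
  exact: measurable_funS mw2.
apply: le_trans (scaled_abse_integral_le mu _ _ _ lam 2 (lam ^+ 2 / 2)
  wi0y mw20y (fun z _ => w20 z) lam0 _ _ _) _ => //.
- by rewrite divr_ge0 ?sqr_ge0.
- by move=> z _; rewrite -EFinM -EFinD lee_fin mul_normr_le_sqr.
apply: leeD.
  apply: lee_wpmul2l => //.
  apply: le_trans (_ : _ <= \int[mu]_(z in I01) ((w t z) ^+ 2 / 4)%:E)%E _.
    exact: ge0_subset_integral.
  apply: ge0_le_integral_nonmeasurable => // z _.
  by rewrite lee_fin lerDr sqr_ge0.
rewrite -[leRHS]mule1 -lebesgue_measure_itv01; apply: lee_wpmul2l.
  by rewrite lee_fin divr_ge0 ?sqr_ge0.
by apply: le_measure => //; rewrite inE.
Qed.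

Lemma displacement_le_energy (phi : R -> R -> R) (phi0 phi1 : R -> R)
    (lam x : R) :
  lagrangian_flow v phi ->
  (forall x, x \in `[0%R, 1%R] -> phi 0 x = phi0 x) ->
  (forall x, x \in `[0%R, 1%R] -> phi 1 x = phi1 x) ->
  0 <= lam -> x \in `[0%R, 1%R] ->
  ((lam * `|phi0 x - phi1 x|)%:E <= 2%:E * energy v w + (lam ^+ 2 / 2)%:E)%E.
Proof.
move=> [flow01 [_ flow]] phi0E phi1E lam0 x01.
have [_ [vi vint]] := flow x x01.
rewrite distrC EFinM -abse_EFin -(phi0E x x01) -(phi1E x x01) vint ?ltr01 //.
rewrite -[X in (_ + X)%E]mule1 -lebesgue_measure_itv01 /energy -/(slice_energy _).
apply: (scaled_abse_integral_le mu _ _ _ lam 2 (lam ^+ 2 / 2) vi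
  measurable_slice_energy (fun t _ => slice_energy_ge0 t)) => //.
- by rewrite divr_ge0 ?sqr_ge0.
- move=> t t01; apply: velocity_le_slice_energy => //; exact: flow01.
Qed.

End energy_bounds.

Lemma sqr_half_displacement_le_dist2 {R : realType} (phi0 phi1 : R -> R) (x : R) :
  x \in `[0%R, 1%R] -> (((`|phi0 x - phi1 x| / 2) ^+ 2)%:E <= dist2 phi0 phi1)%E.
Proof.
move=> x01; apply: le_ereal_inf_tmp => _ [[v w] /= [vw [phi [flow [phi0E phi1E]]]] <-].
have := displacement_le_energy vw _ _ _ _ _ flow phi0E phi1E
  (normr_ge0 (phi0 x - phi1 x)) x01.
move: (`|phi0 x - phi1 x|) => a.
case: (energy v w) => [r| |] //=.
- by rewrite -EFinM -EFinD !lee_fin => h; nra.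
- by rewrite leey.
- by rewrite mulrNy gtr0_sg // mul1e addNye leeNy_eq.
Qed.

Theorem mainTheorem2 (R : realType) (phi0 phi1 : R -> R) :
  Monp phi0 -> Monp phi1 ->
  (ereal_sup [set (`|phi0 x - phi1 x|)%:E | x in `[0%R, 1%R]]
     <= 2%:E * dist phi0 phi1)%E.
Proof.
move=> _ _; apply: ge_ereal_sup => _ [x x01 <-].
have := sqr_half_displacement_le_dist2 phi0 phi1 x x01.
rewrite /dist; case: (dist2 phi0 phi1) => [r| |] //=.
- rewrite -EFinM !lee_fin => /ler_wsqrtr; rewrite sqrtr_sqr ger0_norm ?divr_ge0 //.
  lra.
- by rewrite mulry gtr0_sg // mul1e => _; exact: leey.
Qed.
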